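(* Let $H=(T_1,\dots,T_n,p_1,\dots,p_n)$ be any strategic game. Then for the operator $\overline{GS}$ on the lattice of restrictions of $H$: (i) the largest fixpoint of $\overline{GS}$ exists and equals its outcome; (ii) $\overline{GS}$ is order independent; (iii) for every relaxation $R$ of $\overline{GS}$ and every ordinal $\alpha$, $\overline{GS}^{\alpha}\subseteq R^{\alpha}$.
   Context: A strategic game $H=(T_1,\dots,T_n,p_1,\dots,p_n)$ has nonempty strategy sets $T_i$ and payoffs $p_i:T_1\times\dots\times T_n\to\mathbb R$. A restriction is $G=(S_1,\dots,S_n)$ with $S_i\subseteq T_i$ (possibly empty), ordered by componentwise inclusion (a complete lattice with top $H$). For $s_i,s_i'\in T_i$, $s_i'\succ_G s_i$ means $p_i(s_i',s_{-i})>p_i(s_i,s_{-i})$ for all $s_{-i}\in S_{-i}:=\prod_{j\ne i}S_j$ (vacuously true if $S_{-i}=\emptyset$). $GS(G):=(S_1',\dots,S_n')$ with $S_i':=\{s_i\in T_i\mid\neg\exists s_i'\in T_i:\ s_i'\succ_G s_i\}$, and $\overline{GS}(G):=GS(G)\cap G$. Operator notions: fixpoint $T(G)=G$; iterations $T^0:=H$, $T^{\alpha+1}:=T(T^\alpha)$, $T^\beta:=\bigcap_{\alpha<\beta}T^\alpha$ for limit $\beta$; outcome $T^{\alpha_T}$ with $\alpha_T$ the least $\alpha$ such that $T^{\alpha+1}=T^\alpha$. $R$ is a relaxation of $T$ if for all ordinals $\alpha$: (1) $T(R^\alpha)\subseteq R(R^\alpha)$; (2) if $T(R^\alpha)\subseteq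 R^\alpha$ then $R(R^\alpha)\subseteq R^\alpha$; (3) if $R(R^\alpha)=R^\alpha$ then $T(R^\alpha)=R^\alpha$. $T$ is order independent if the set of outcomes of relaxations of $T$ has at most one element. *)

From Stdlib Require Import Reals.
From Stdlib Require Fin.
Open Scope R_scope.

Section Game.
Context {n : nat} (T : Fin.t n -> Type).

Definition restr : Type := forall i : Fin.t n, T i -> Prop.

Definition rtop : restr := fun _ _ => True.

Definition rsub (G G' : restr) : Prop := forall i (x : T i), G i x -> G' i x.

Definition rcap (G G' : restr) : restr := fun i x => G i x /\ G' i x.

Definition upd (s : forall j, T j) (i : Fin.t n) (x : T i) : forall j, T j :=
  fun j => match Fin.eq_dec i j with
           | left e => eq_rect i T x j e
           | right _ => s j
           end.

Variable p : forall i : Fin.t n, (forall j, T j) -> R.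

(** s_i' ≻_G s_i : for all s_{-i} in S_{-i}, p_i(s_i', s_{-i}) > p_i(s_i, s_{-i}).
    s_{-i} is represented by a full profile s whose coordinates j <> i lie in S_j
    (the i-th coordinate is overwritten); vacuous iff some S_j (j<>i) is empty. *)
Definition sdom (G : restr) (i : Fin.t n) (x' x : T i) : Prop :=
  forall s : forall j, T j, (forall j, j <> i -> G j (s j)) ->
    p i (upd s i x') > p i (upd s i x).

Definition GS (G : restr) : restr := fun i x => ~ exists x' : T i, sdom G i x' x.

Definition GSbar (G : restr) : restr := rcap (GS G) G.

End Game.

(** Well-ordered types; an element w of a well-order represents the ordinal
    (order type) of its initial segment {v | v < w}.  Every ordinal arises so. *)
Record wellorder : Type := {
  wo_car :> Type;
  wo_lt : wo_car -> wo_car -> Prop;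
  wo_wf : well_founded wo_lt;
  wo_trans : forall x y z, wo_lt x y -> wo_lt y z -> wo_lt x z;
  wo_total : forall x y, wo_lt x y \/ x = y \/ wo_lt y x
}.

Section Iter.
Context {n : nat} {T : Fin.t n -> Type}.

(** f is the transfinite iteration of the operator Op along the well-order W:
    f w = Op^{alpha} where alpha is the order type of {v | v < w}:
    T^0 = H, T^{alpha+1} = T(T^alpha), T^beta = ⋂_{alpha<beta} T^alpha (beta limit). *)
Definition IsIter (Op : restr T -> restr T) (W : wellorder) (f : W -> restr T) : Prop :=
  forall w : W,
    ((forall v, ~ wo_lt W v w) -> f w = rtop T) /\
    (forall v, wo_lt W v w -> (forall u, ~ (wo_lt W v u /\ wo_lt W u w)) ->
       f w = Op (f v)) /\
    ((exists v, wo_lt W v w) ->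
     (forall v, wo_lt W v w -> exists u, wo_lt W v u /\ wo_lt W u w) ->
       f w = (fun i x => forall v, wo_lt W v w -> f v i x)).

Definition IsIterate (Op : restr T -> restr T) (X : restr T) : Prop :=
  exists (W : wellorder) (f : W -> restr T) (w : W), IsIter Op W f /\ f w = X.

Definition outcome (Op : restr T -> restr T) (G : restr T) : Prop :=
  exists (W : wellorder) (f : W -> restr T) (w : W),
    IsIter Op W f /\ f w = G /\ Op G = G /\
    (forall v, wo_lt W v w -> Op (f v) <> f v).

(** R is a relaxation of Top (conditions (1)-(3) for every ordinal alpha) *)
Definition relaxation (Top R : restr T -> restr T) : Prop :=
  forall X, IsIterate R X ->
    rsub T (Top X) (R X) /\
    (rsub T (Top X) X -> rsub T (R X) X) /\
    (R X = X -> Top X = X).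

Definition order_independent (Top : restr T -> restr T) : Prop :=
  forall R1 R2 G1 G2, relaxation Top R1 -> relaxation Top R2 ->
    outcome R1 G1 -> outcome R2 G2 -> G1 = G2.

End Iter.

(* GS-bar is monotone and contracting, and that is all the argument uses.
   For such an operator the closure of the top restriction under the operator
   and under arbitrary intersections (a Bourbaki-Witt tower) is well-ordered by
   reverse inclusion; indexed by itself it is a transfinite iteration whose last
   element, the intersection of the whole tower, is the largest fixpoint and the
   outcome.  By well-founded induction, the iterates of a monotone operator stay
   below the iterates of any relaxation (condition (1)); and the outcome of a
   relaxation is a fixpoint of the operator (condition (3)) lying above its
   largest fixpoint, hence equal to it. *)

From Stdlib Require Import Reals.
From Stdlib Require Fin.
From Stdlib Require Import Classical FunctionalExtensionality PropExtensionality ProofIrrelevance.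

Section Restrictions.
Context {n : nat} (T : Fin.t n -> Type).

Lemma restr_ext (A B : restr T) : rsub T A B -> rsub T B A -> A = B.
Proof.
  intros hAB hBA. apply functional_extensionality_dep; intro i.
  apply functional_extensionality; intro x.
  apply propositional_extensionality; split; auto.
Qed.

Definition rmeet (Fm : restr T -> Prop) : restr T := fun i x => forall Y, Fm Y -> Y i x.

Lemma rmeet_empty : rmeet (fun _ => False) = rtop T.
Proof. apply restr_ext; [intros i x _; exact I | intros i x _ Y []]. Qed.

End Restrictions.

Section MonotoneContracting.
Context {n : nat} (T : Fin.t n -> Type) (F : restr T -> restr T).
Hypothesis F_mono : forall A B, rsub T A B -> rsub T (F A) (F B).
Hypothesis F_contr : forall A, rsub T (F A) A.

Inductive tower : restr T -> Prop :=
| tower_step Y : tower Y -> tower (F Y)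
| tower_meet (Fm : restr T -> Prop) : (forall Y, Fm Y -> tower Y) -> tower (rmeet T Fm).

Lemma tower_top : tower (rtop T).
Proof. rewrite <- rmeet_empty. apply tower_meet. intros _ []. Qed.

Lemma postfix_sub_tower G : rsub T G (F G) -> forall Y, tower Y -> rsub T G Y.
Proof.
  intros hG Y HY. induction HY as [Z _ IH | Fm _ IH].
  - intros i x hx. apply (F_mono _ _ IH). apply hG, hx.
  - intros i x hx Y hY. exact (IH Y hY i x hx).
Qed.

(* Bourbaki-Witt: an element is extreme when every strictly larger tower
   element is mapped below it by F. *)
Definition extreme X :=
  forall Y, tower Y -> rsub T X Y -> ~ rsub T Y X -> rsub T X (F Y).

Lemma tower_cmp_of_extreme X : extreme X ->
  forall Y, tower Y -> rsub T Y (F X) \/ rsub T X Y.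
Proof.
  intros EX Y HY. induction HY as [Z HZ IH | Fm _ IH].
  - destruct IH as [hZ | hXZ].
    + left. intros i x hx. apply hZ, F_contr, hx.
    + destruct (classic (rsub T Z X)) as [hZX | hZX].
      * left. exact (F_mono _ _ hZX).
      * right. exact (EX Z HZ hXZ hZX).
  - destruct (classic (exists Z, Fm Z /\ rsub T Z (F X))) as [[Z [HZ hZ]] | hno].
    + left. intros i x hx. exact (hZ i x (hx Z HZ)).
    + right. intros i x hx Z HZ. destruct (IH Z HZ) as [hZ | hXZ].
      * exfalso. eauto.
      * exact (hXZ i x hx).
Qed.

Lemma tower_extreme X : tower X -> extreme X.
Proof.
  intros HX. induction HX as [Z HZ IH | Fm HFm IH]; intros Y HY hXY hYX.
  - destruct (tower_cmp_of_extreme Z IH Y HY) as [hY | hZY].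
    + contradiction.
    + exact (F_mono _ _ hZY).
  - destruct (classic (exists Z, Fm Z /\ ~ rsub T Y Z)) as [[Z [HZ hYZ]] | hno].
    + destruct (tower_cmp_of_extreme Z (IH Z HZ) Y HY) as [hY | hZY].
      * exfalso. apply hYZ. intros i x hx. apply F_contr, hY, hx.
      * intros i x hx. exact (IH Z HZ Y HY hZY hYZ i x (hx Z HZ)).
    + exfalso. apply hYX. intros i x hx Z HZ.
      apply NNPP. intro hn. apply hno. exists Z. split; [exact HZ |].
      intro hYZ. exact (hn (hYZ i x hx)).
Qed.

Lemma tower_cmp X Y : tower X -> tower Y -> rsub T Y (F X) \/ rsub T X Y.
Proof. intros HX. exact (tower_cmp_of_extreme X (tower_extreme X HX) Y). Qed.

Lemma tower_total X Y : tower X -> tower Y -> rsub T X Y \/ rsub T Y X.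
Proof.
  intros HX HY. destruct (tower_cmp X Y HX HY) as [hY | hXY]; [right | left; exact hXY].
  intros i x hx. apply F_contr, hY, hx.
Qed.

Definition tower_elt := {X : restr T | tower X}.

Definition tower_lt (a b : tower_elt) : Prop :=
  rsub T (proj1_sig b) (proj1_sig a) /\ ~ rsub T (proj1_sig a) (proj1_sig b).

Lemma Acc_tower_lt_eq (a b : tower_elt) : Acc tower_lt a ->
  rsub T (proj1_sig b) (proj1_sig a) -> rsub T (proj1_sig a) (proj1_sig b) ->
  Acc tower_lt b.
Proof.
  intros [Ha] hba hab. constructor. intros c [hbc hcb]. apply Ha. split.
  - intros i x hx. apply hbc, hab, hx.
  - intros hca. apply hcb. intros i x hx. apply hab, hca, hx.
Qed.

Lemma tower_lt_wf : well_founded tower_lt.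
Proof.
  intros [X HX0]. pose proof HX0 as HX. revert HX0.
  induction HX as [Z HZ IH | Fm HFm IH]; intros HX0;
    constructor; intros [V HV] [hXV hVX]; simpl in hXV, hVX.
  - destruct (tower_cmp Z V HZ HV) as [hV | hZV]; [contradiction |].
    destruct (classic (rsub T V Z)) as [hVZ | hVZ].
    + exact (Acc_tower_lt_eq (exist _ Z HZ) (exist _ V HV) (IH HZ) hVZ hZV).
    + destruct (IH HZ) as [a]. apply a. split; assumption.
  - destruct (classic (exists Z, Fm Z /\ ~ rsub T V Z)) as [[Z [HZ hVZ]] | hno].
    + destruct (tower_total Z V (HFm Z HZ) HV) as [hZV | hVZ']; [| contradiction].
      destruct (IH Z HZ (HFm Z HZ)) as [a]. apply a. split; assumption.
    + exfalso. apply hVX. intros i x hx Z HZ.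
      apply NNPP. intro hn. apply hno. exists Z. split; [exact HZ |].
      intro hVZ. exact (hn (hVZ i x hx)).
Qed.

Lemma tower_lt_trans a b c : tower_lt a b -> tower_lt b c -> tower_lt a c.
Proof.
  destruct a as [A HA], b as [B HB], c as [C HC]; unfold tower_lt; simpl.
  intros [hBA hAB] [hCB hBC]. split.
  - intros i x hx. apply hBA, hCB, hx.
  - intros hAC. apply hBC. intros i x hx. apply hAC, hBA, hx.
Qed.

Lemma tower_lt_total a b : tower_lt a b \/ a = b \/ tower_lt b a.
Proof.
  assert (eq_elt : forall a b : tower_elt, rsub T (proj1_sig a) (proj1_sig b) ->
            rsub T (proj1_sig b) (proj1_sig a) -> a = b).
  { intros [A HA] [B HB] hAB hBA; simpl in *.
    destruct (restr_ext T A B hAB hBA). f_equal. apply proof_irrelevance. }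
  unfold tower_lt. destruct (tower_total _ _ (proj2_sig a) (proj2_sig b)) as [hab | hba].
  - destruct (classic (rsub T (proj1_sig b) (proj1_sig a))); auto.
  - destruct (classic (rsub T (proj1_sig a) (proj1_sig b))); auto.
Qed.

Definition tower_wellorder : wellorder :=
  Build_wellorder tower_elt tower_lt tower_lt_wf tower_lt_trans tower_lt_total.

Lemma tower_IsIter : IsIter F tower_wellorder (fun a : tower_wellorder => proj1_sig a).
Proof.
  intros [W HW]. simpl. split; [| split].
  - intros hmin. apply restr_ext; [intros i x _; exact I |].
    apply NNPP. intro hn. apply (hmin (exist _ (rtop T) tower_top)).
    split; [intros i x _; exact I | exact hn].
  - intros [V HV] [hWV hVW] himm; simpl in *.
    destruct (tower_cmp V W HV HW) as [hW | hVW']; [| contradiction].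
    apply restr_ext; [exact hW |]. apply NNPP. intro hn.
    destruct (classic (rsub T V (F V))) as [hfix | hnfix].
    + exact (hVW (postfix_sub_tower V hfix W HW)).
    + apply (himm (exist _ (F V) (tower_step V HV))).
      split; split; simpl; auto.
  - intros _ hlim. apply restr_ext.
    + intros i x hx [V HV] [hWV _]. exact (hWV i x hx).
    + set (M := rmeet T (fun Y => tower Y /\ rsub T W Y /\ ~ rsub T Y W)).
      assert (HM : tower M) by (apply tower_meet; intros Y hY; exact (proj1 hY)).
      assert (hMW : rsub T M W).
      { apply NNPP. intro hn.
        destruct (tower_total M W HM HW) as [hMW | hWM]; [contradiction |].
        destruct (hlim (exist _ M HM)) as [[U HU] [[hUM hMU] [hWU hUW]]];
          [split; assumption |].
        simpl in *. apply hMU. intros i x hx. apply hx. auto. }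
      intros i x hx. apply hMW. intros Y [HY [hWY hYW]].
      exact (hx (exist _ Y HY) (conj hWY hYW)).
Qed.

Definition gfp : restr T := rmeet T tower.

Lemma tower_gfp : tower gfp.
Proof. apply tower_meet. auto. Qed.

Lemma gfp_fix : F gfp = gfp.
Proof.
  apply restr_ext; [apply F_contr |].
  intros i x hx. exact (hx (F gfp) (tower_step gfp tower_gfp)).
Qed.

Lemma postfix_sub_gfp G : rsub T G (F G) -> rsub T G gfp.
Proof. intros hG i x hx Y HY. exact (postfix_sub_tower G hG Y HY i x hx). Qed.

Lemma fix_sub_gfp G : F G = G -> rsub T G gfp.
Proof. intros hG. apply postfix_sub_gfp. rewrite hG. intros i x hx; exact hx. Qed.

Lemma outcome_gfp : outcome F gfp.
Proof.
  exists tower_wellorder, (fun a : tower_wellorder => proj1_sig a), (exist _ gfp tower_gfp).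
  split; [exact tower_IsIter | split; [reflexivity | split; [exact gfp_fix |]]].
  intros [V HV] [_ hVgfp] hfix. exact (hVgfp (fix_sub_gfp V hfix)).
Qed.

(* [h] decreases at least as fast as the F-iteration along [W]; no condition
   is needed at the bottom, where iterations are [rtop]. *)
Definition IsSubIter (W : wellorder) (h : W -> restr T) : Prop :=
  (forall w v, wo_lt W v w -> (forall u, ~ (wo_lt W v u /\ wo_lt W u w)) ->
     rsub T (h w) (F (h v))) /\
  (forall w, (exists v, wo_lt W v w) ->
     (forall v, wo_lt W v w -> exists u, wo_lt W v u /\ wo_lt W u w) ->
     forall v, wo_lt W v w -> rsub T (h w) (h v)).

Lemma IsIter_IsSubIter W f : IsIter F W f -> IsSubIter W f.
Proof.
  intros Hf. split.
  - intros w v hv himm. rewrite (proj1 (proj2 (Hf w)) v hv himm). intros i x hx; exact hx.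
  - intros w hex hlim v hv. rewrite (proj2 (proj2 (Hf w)) hex hlim).
    intros i x hx. exact (hx v hv).
Qed.

Lemma IsSubIter_gfp W : IsSubIter W (fun _ => gfp).
Proof. split; intros; [rewrite gfp_fix |]; intros i x hx; exact hx. Qed.

Lemma IsSubIter_sub_relaxation (Rel : restr T -> restr T) : relaxation F Rel ->
  forall W g h, IsIter Rel W g -> IsSubIter W h -> forall w, rsub T (h w) (g w).
Proof.
  intros HRel W g h Hg [hsucc hlim] w.
  induction w as [w IH] using (well_founded_ind (wo_wf W)).
  destruct (Hg w) as [g_zero [g_succ g_lim]].
  destruct (classic (exists v, wo_lt W v w)) as [hex | hnex].
  - destruct (classic (exists v, wo_lt W v w /\
        forall u, ~ (wo_lt W v u /\ wo_lt W u w))) as [[v [hv himm]] | hnimm].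
    + rewrite (g_succ v hv himm). intros i x hx.
      assert (Hv : IsIterate Rel (g v)) by (exists W, g, v; split; auto).
      apply (proj1 (HRel (g v) Hv)). apply (F_mono _ _ (IH v hv)), (hsucc w v hv himm), hx.
    + assert (hw : forall v, wo_lt W v w -> exists u, wo_lt W v u /\ wo_lt W u w).
      { intros v hv. apply NNPP. intro hn. apply hnimm. exists v. split; [exact hv |].
        intros u hu. apply hn. exists u. exact hu. }
      rewrite (g_lim hex hw). intros i x hx v hv. apply (IH v hv), (hlim w hex hw v hv), hx.
  - rewrite g_zero; [intros i x _; exact I |]. intros v hv. apply hnex. eauto.
Qed.

Lemma relaxation_outcome_gfp (Rel : restr T -> restr T) G :
  relaxation F Rel -> outcome Rel G -> G = gfp.
Proof.
  intros HRel [W [g [w [Hg [hgw [hfix _]]]]]].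
  assert (HG : IsIterate Rel G) by (exists W, g, w; split; auto).
  apply restr_ext.
  - exact (fix_sub_gfp G (proj2 (proj2 (HRel G HG)) hfix)).
  - rewrite <- hgw. exact (IsSubIter_sub_relaxation Rel HRel W g _ Hg (IsSubIter_gfp W) w).
Qed.

End MonotoneContracting.

Lemma GSbar_mono {n : nat} (T : Fin.t n -> Type) (p : forall i : Fin.t n, (forall j, T j) -> R)
  (A B : restr T) : rsub T A B -> rsub T (GSbar T p A) (GSbar T p B).
Proof.
  intros hAB i x [hGS hx]. split; [| exact (hAB i x hx)].
  intros [x' hdom]. apply hGS. exists x'. intros s hs. apply hdom.
  intros j hj. exact (hAB j _ (hs j hj)).
Qed.

Lemma GSbar_contr {n : nat} (T : Fin.t n -> Type) (p : forall i : Fin.t n, (forall j, T j) -> R)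
  (A : restr T) : rsub T (GSbar T p A) A.
Proof. intros i x [_ hx]. exact hx. Qed.

Theorem mainTheorem8 (n : nat) (T : Fin.t n -> Type)
  (HT : forall i, inhabited (T i))
  (p : forall i : Fin.t n, (forall j, T j) -> R) :
  (exists G : restr T,
      GSbar T p G = G /\
      (forall G' : restr T, GSbar T p G' = G' -> rsub T G' G) /\
      outcome (GSbar T p) G) /\
  order_independent (GSbar T p) /\
  (forall R : restr T -> restr T, relaxation (GSbar T p) R ->
     forall (W : wellorder) (f g : W -> restr T),
       IsIter (GSbar T p) W f -> IsIter R W g ->
       forall w : W, rsub T (f w) (g w)).
Proof.
  pose proof (GSbar_mono T p) as mono. pose proof (GSbar_contr T p) as contr.
  split; [| split].
  - exists (gfp T (GSbar T p)). split; [| split].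
    + exact (gfp_fix T _ contr).
    + exact (fix_sub_gfp T _ mono).
    + exact (outcome_gfp T _ mono contr).
  - intros R1 R2 G1 G2 HR1 HR2 HG1 HG2.
    rewrite (relaxation_outcome_gfp T _ mono contr R1 G1 HR1 HG1).
    exact (eq_sym (relaxation_outcome_gfp T _ mono contr R2 G2 HR2 HG2)).
  - intros Rel HRel W f g Hf Hg.
    exact (IsSubIter_sub_relaxation T _ mono Rel HRel W g f Hg (IsIter_IsSubIter T _ W f Hf)).
Qed.
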